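(* Let $\sigma,\rho\in\mathbb{R}$ and $\alpha,\beta,\gamma\in\mathbb{C}$. Define the Laurent polynomials $$\eta^{(2)}(\zeta)=\frac{\sigma}{\zeta}\,\frac{(\zeta-\gamma)(\bar\gamma\zeta+1)}{1+|\gamma|^2},\qquad \eta^{(4)}(\zeta)=\frac{\rho}{\zeta^2}\,\frac{(\zeta-\alpha)(\bar\alpha\zeta+1)}{1+|\alpha|^2}\,\frac{(\zeta-\beta)(\bar\beta\zeta+1)}{1+|\beta|^2},$$ and write their expansions as $\eta^{(2)}(\zeta)=\frac{\bar z_1}{\zeta}+x_1-z_1\zeta$ and $\eta^{(4)}(\zeta)=\frac{\bar z_2}{\zeta^2}+\frac{\bar v_2}{\zeta}+x_2-v_2\zeta+z_2\zeta^2$ (so $x_1,x_2\in\mathbb{R}$, $z_1,z_2,v_2\in\mathbb{C}$). Define $$g_{\sigma^2}=4|z_1|^2+x_1^2,\qquad g_{\rho^2}=4|z_2|^2+|v_2|^2+\tfrac13x_2^2,$$ $$g_{\rho\sigma^2}=\tfrac23x_2(x_1^2-2|z_1|^2)+4z_2\bar z_1^2+4\bar z_2z_1^2+2v_2\bar z_1x_1+2\bar v_2z_1x_1,$$ $$g_{\rho^2\sigma^2}=(8|z_2|^2-|v_2|^2-\tfrac23x_2^2)(x_1^2-2|z_1|^2)-12z_2\bar v_2\bar z_1x_1-12\bar z_2v_2z_1x_1+8z_2x_2\bar z_1^2+8\bar z_2x_2z_1^2-2v_2x_2\bar z_1x_1-2\bar v_2x_2z_1x_1-3v_2^2\bar z_1^2-3\bar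 v_2^2z_1^2.$$ For $a,b\in\mathbb{C}$ let $\delta_{ab}=2\arccos\frac{|1+\bar a b|}{\sqrt{(1+|a|^2)(1+|b|^2)}}$ (the Fubini–Study distance on the Riemann sphere), and set $$Q_\pm^2=(\cos\delta_{\alpha\gamma}\pm\cos\delta_{\beta\gamma})^2,\qquad Q_0^2=\det\begin{pmatrix}1&\cos\delta_{\alpha\gamma}&\cos\delta_{\alpha\beta}\\ \cos\delta_{\alpha\gamma}&1&\cos\delta_{\beta\gamma}\\ \cos\delta_{\alpha\beta}&\cos\delta_{\beta\gamma}&1\end{pmatrix}.$$ Then $$g_{\rho\sigma^2}=\rho\sigma^2\Big(\cos\delta_{\alpha\gamma}\cos\delta_{\beta\gamma}-\tfrac13\cos\delta_{\alpha\beta}\Big),\qquad g_{\rho^2\sigma^2}=g_{\rho^2}g_{\sigma^2}+\tfrac14\rho^2\sigma^2\big(Q_0^2-Q_+^2-Q_-^2\big).$$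
   Context: $\eta^{(2)}$ and $\eta^{(4)}$ are real ${\cal O}(2)$ and ${\cal O}(4)$ multiplets in Majorana (root) form; the quantities $g$ are $SU(2)$-invariants built from their coefficients. *)

From Stdlib Require Import Reals.
From Coquelicot Require Import Coquelicot.
Open Scope R_scope.

Definition eta2 (sigma : R) (gamma zeta : C) : C :=
  (RtoC sigma / zeta * ((zeta - gamma) * (Cconj gamma * zeta + 1))
     / RtoC (1 + Cmod gamma ^ 2))%C.

Definition eta4 (rho : R) (alpha beta zeta : C) : C :=
  (RtoC rho / (zeta * zeta)
     * (((zeta - alpha) * (Cconj alpha * zeta + 1)) / RtoC (1 + Cmod alpha ^ 2))
     * (((zeta - beta) * (Cconj beta * zeta + 1)) / RtoC (1 + Cmod beta ^ 2)))%C.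

Definition delta (a b : C) : R :=
  2 * acos (Cmod (1 + Cconj a * b)%C / sqrt ((1 + Cmod a ^ 2) * (1 + Cmod b ^ 2))).

Definition det3 (a11 a12 a13 a21 a22 a23 a31 a32 a33 : R) : R :=
  a11 * (a22 * a33 - a23 * a32) - a12 * (a21 * a33 - a23 * a31)
  + a13 * (a21 * a32 - a22 * a31).

Definition Qplus2 (alpha beta gamma : C) : R :=
  (cos (delta alpha gamma) + cos (delta beta gamma)) ^ 2.
Definition Qminus2 (alpha beta gamma : C) : R :=
  (cos (delta alpha gamma) - cos (delta beta gamma)) ^ 2.
Definition Q02 (alpha beta gamma : C) : R :=
  let cag := cos (delta alpha gamma) in
  let cab := cos (delta alpha beta) in
  let cbg := cos (delta beta gamma) in
  det3 1 cag cab  cag 1 cbg  cab cbg 1.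

Definition g_sigma2 (z1 : C) (x1 : R) : R := 4 * Cmod z1 ^ 2 + x1 ^ 2.
Definition g_rho2 (z2 v2 : C) (x2 : R) : R :=
  4 * Cmod z2 ^ 2 + Cmod v2 ^ 2 + / 3 * x2 ^ 2.

Definition g_rhosigma2 (z1 : C) (x1 : R) (z2 v2 : C) (x2 : R) : C :=
  (RtoC (2 / 3 * x2 * (x1 ^ 2 - 2 * Cmod z1 ^ 2))
   + 4 * z2 * (Cconj z1 * Cconj z1) + 4 * Cconj z2 * (z1 * z1)
   + 2 * v2 * Cconj z1 * RtoC x1 + 2 * Cconj v2 * z1 * RtoC x1)%C.

Definition g_rho2sigma2 (z1 : C) (x1 : R) (z2 v2 : C) (x2 : R) : C :=
  (RtoC ((8 * Cmod z2 ^ 2 - Cmod v2 ^ 2 - 2 / 3 * x2 ^ 2) * (x1 ^ 2 - 2 * Cmod z1 ^ 2))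
   - 12 * z2 * Cconj v2 * Cconj z1 * RtoC x1
   - 12 * Cconj z2 * v2 * z1 * RtoC x1
   + 8 * z2 * RtoC x2 * (Cconj z1 * Cconj z1)
   + 8 * Cconj z2 * RtoC x2 * (z1 * z1)
   - 2 * v2 * RtoC x2 * Cconj z1 * RtoC x1
   - 2 * Cconj v2 * RtoC x2 * z1 * RtoC x1
   - 3 * (v2 * v2) * (Cconj z1 * Cconj z1)
   - 3 * (Cconj v2 * Cconj v2) * (z1 * z1))%C.

(* Both multiplets are in root form, so comparing coefficients of the two
   Laurent expansions expresses z1, x1 (resp. z2, v2, x2) as explicit rational
   functions of the roots gamma (resp. alpha, beta).  The cosines of the
   Fubini-Study distances are rational functions of the roots as well, since
   cos (2 acos t) = 2 t^2 - 1, and both identities then reduce to rational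
   identities in the real and imaginary parts of alpha, beta and gamma. *)
From Stdlib Require Import Reals Lra Psatz.
From Coquelicot Require Import Coquelicot.
Open Scope R_scope.

Lemma Cmod_sqr (z : C) : Cmod z ^ 2 = fst z ^ 2 + snd z ^ 2.
Proof. unfold Cmod. rewrite pow2_sqrt; nra. Qed.

Lemma Cmod_one_plus_conj_mul_sqr_le (a b : C) :
  Cmod (1 + Cconj a * b)%C ^ 2 <= (1 + Cmod a ^ 2) * (1 + Cmod b ^ 2).
Proof.
  destruct a as [a1 a2], b as [b1 b2]. rewrite !Cmod_sqr. simpl fst; simpl snd.
  (* the difference of the two sides is |a - b|^2 *)
  pose proof (pow2_ge_0 (a1 - b1)). pose proof (pow2_ge_0 (a2 - b2)). nra.
Qed.

Lemma cos_delta (a b : C) :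
  cos (delta a b) =
  2 * Cmod (1 + Cconj a * b)%C ^ 2 / ((1 + Cmod a ^ 2) * (1 + Cmod b ^ 2)) - 1.
Proof.
  unfold delta. rewrite cos_2a_cos.
  set (M := Cmod (1 + Cconj a * b)%C).
  set (P := (1 + Cmod a ^ 2) * (1 + Cmod b ^ 2)).
  assert (HP : 0 < P) by (unfold P; nra).
  assert (HMP : M ^ 2 <= P) by apply Cmod_one_plus_conj_mul_sqr_le.
  assert (HM : 0 <= M) by apply Cmod_ge_0.
  assert (Hs : 0 < sqrt P) by (apply sqrt_lt_R0; exact HP).
  assert (Hq : 0 <= M / sqrt P <= 1).
  { split; [apply Rdiv_le_0_compat; lra |].
    apply Rmult_le_reg_r with (sqrt P); [exact Hs |].
    unfold Rdiv. rewrite Rmult_assoc, Rinv_l, Rmult_1_r, Rmult_1_l by lra.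
    apply Rsqr_incr_0_var; [| lra].
    unfold Rsqr. rewrite sqrt_sqrt; nra. }
  rewrite cos_acos by lra.
  rewrite <- (sqrt_sqrt P) at 3 by lra.
  field. lra.
Qed.

Lemma one_plus_sqr_sum_neq0 (a b : R) : 1 + (a ^ 2 + b ^ 2) <> 0.
Proof. pose proof (pow2_ge_0 a). pose proof (pow2_ge_0 b). lra. Qed.

Lemma RtoC_neq0 (x : R) : x <> 0 -> RtoC x <> 0%C.
Proof. intros Hx E. apply (f_equal fst) in E. auto. Qed.

Lemma quartic_coefs_eq0 (c0 c1 c2 c3 c4 : C) :
  (forall z : C, z <> 0%C ->
     (c0 + c1 * z + c2 * (z * z) + c3 * (z * z * z) + c4 * (z * z * (z * z)) = 0)%C) ->
  c0 = 0%C /\ c1 = 0%C /\ c2 = 0%C /\ c3 = 0%C /\ c4 = 0%C.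
Proof.
  intros H.
  assert (pure_imaginary_neq0 : forall s : R, s <> 0 -> @pair R R 0 s <> RtoC 0)
    by (intros s Hs E; apply (f_equal snd) in E; auto).
  (* the values at 1, -1, 2, i and -i already determine the five coefficients *)
  pose proof (H (RtoC 1) (RtoC_neq0 1 ltac:(lra))) as E1.
  pose proof (H (RtoC (-1)) (RtoC_neq0 (-1) ltac:(lra))) as E2.
  pose proof (H (RtoC 2) (RtoC_neq0 2 ltac:(lra))) as E3.
  pose proof (H (@pair R R 0 1) (pure_imaginary_neq0 1 ltac:(lra))) as E4.
  pose proof (H (@pair R R 0 (-1)) (pure_imaginary_neq0 (-1) ltac:(lra))) as E5.
  destruct c0 as [p0 q0], c1 as [p1 q1], c2 as [p2 q2], c3 as [p3 q3], c4 as [p4 q4].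
  unfold Cplus, Cmult, RtoC in *. simpl in *.
  apply pair_equal_spec in E1, E2, E3, E4, E5.
  repeat split; apply injective_projections; simpl; lra.
Qed.

Definition eta2_z1 (sigma : R) (gamma : C) : C :=
  (RtoC (- sigma / (1 + Cmod gamma ^ 2)) * Cconj gamma)%C.
Definition eta2_x1 (sigma : R) (gamma : C) : R :=
  sigma * (1 - Cmod gamma ^ 2) / (1 + Cmod gamma ^ 2).

Definition eta4_z2 (rho : R) (alpha beta : C) : C :=
  (RtoC (rho / ((1 + Cmod alpha ^ 2) * (1 + Cmod beta ^ 2)))
   * Cconj alpha * Cconj beta)%C.
Definition eta4_v2 (rho : R) (alpha beta : C) : C :=
  (RtoC (- rho / ((1 + Cmod alpha ^ 2) * (1 + Cmod beta ^ 2)))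
   * (Cconj alpha * RtoC (1 - Cmod beta ^ 2) + Cconj beta * RtoC (1 - Cmod alpha ^ 2)))%C.
Definition eta4_x2 (rho : R) (alpha beta : C) : R :=
  rho * ((1 - Cmod alpha ^ 2) * (1 - Cmod beta ^ 2) - 2 * Re (Cconj alpha * beta))
  / ((1 + Cmod alpha ^ 2) * (1 + Cmod beta ^ 2)).

Ltac nonzero_weights :=
  repeat split; try apply RtoC_neq0; try assumption;
  try match goal with |- context [Cmod ?z] => pose proof (pow2_ge_0 (Cmod z)) end;
  try lra.

Ltac to_coordinates :=
  repeat match goal with c : C |- _ => destruct c end;
  rewrite ?Cmod_sqr;
  cbv [Re Cminus Cplus Cmult Copp Cconj Cdiv Cinv RtoC fst snd];
  (* clearing the zero imaginary parts of real scalars keeps [field] fast *)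
  repeat rewrite ?Rmult_0_l, ?Rmult_0_r, ?Rplus_0_l, ?Rplus_0_r,
    ?Rminus_0_r, ?Rminus_0_l, ?Ropp_0, ?Ropp_involutive.

Lemma eta2_coefficients (sigma : R) (gamma z1 : C) (x1 : R) :
  (forall zeta : C, zeta <> 0%C ->
     eta2 sigma gamma zeta = (Cconj z1 / zeta + RtoC x1 - z1 * zeta)%C) ->
  z1 = eta2_z1 sigma gamma /\ x1 = eta2_x1 sigma gamma.
Proof.
  intros H2. set (K := (RtoC sigma / RtoC (1 + Cmod gamma ^ 2))%C).
  assert (P2 : forall z : C, z <> 0%C ->
    ((- K * gamma - Cconj z1) + (K * (1 - gamma * Cconj gamma) - RtoC x1) * z
     + (K * Cconj gamma + z1) * (z * z) + 0 * (z * z * z) + 0 * (z * z * (z * z)) = 0)%C).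
  { intros z Hz.
    transitivity (z * (eta2 sigma gamma z - (Cconj z1 / z + RtoC x1 - z1 * z)))%C.
    - unfold eta2, K. field. nonzero_weights.
    - rewrite H2 by exact Hz. ring. }
  destruct (quartic_coefs_eq0 _ _ _ _ _ P2) as (_ & Hx1 & Hz1 & _).
  split.
  - transitivity ((K * Cconj gamma + z1) - K * Cconj gamma)%C; [ring |].
    rewrite Hz1. unfold eta2_z1, K. clear. to_coordinates. f_equal; field; nra.
  - set (c := (K * (1 - gamma * Cconj gamma))%C) in Hx1.
    assert (E : RtoC x1 = (c - (c - RtoC x1))%C) by ring.
    rewrite Hx1 in E. apply (f_equal fst) in E. change (fst (RtoC x1)) with x1 in E.
    rewrite E. unfold eta2_x1, c, K. clear.
    assert (0 <= Cmod gamma ^ 2) by apply pow2_ge_0.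
    to_coordinates. field. nra.
Qed.

Lemma eta4_coefficients (rho : R) (alpha beta z2 v2 : C) (x2 : R) :
  (forall zeta : C, zeta <> 0%C ->
     eta4 rho alpha beta zeta =
       (Cconj z2 / (zeta * zeta) + Cconj v2 / zeta + RtoC x2
        - v2 * zeta + z2 * (zeta * zeta))%C) ->
  z2 = eta4_z2 rho alpha beta /\ v2 = eta4_v2 rho alpha beta
  /\ x2 = eta4_x2 rho alpha beta.
Proof.
  intros H4.
  set (L := (RtoC rho / (RtoC (1 + Cmod alpha ^ 2) * RtoC (1 + Cmod beta ^ 2)))%C).
  set (Pa := (1 - alpha * Cconj alpha)%C). set (Pb := (1 - beta * Cconj beta)%C).
  assert (P4 : forall z : C, z <> 0%C ->
    ((L * alpha * beta - Cconj z2)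
     + (L * (- alpha * Pb - beta * Pa) - Cconj v2) * z
     + (L * (- Cconj alpha * beta - alpha * Cconj beta + Pa * Pb) - RtoC x2) * (z * z)
     + (L * (Cconj alpha * Pb + Cconj beta * Pa) + v2) * (z * z * z)
     + (L * Cconj alpha * Cconj beta - z2) * (z * z * (z * z)) = 0)%C).
  { intros z Hz.
    transitivity (z * z * (eta4 rho alpha beta z
      - (Cconj z2 / (z * z) + Cconj v2 / z + RtoC x2 - v2 * z + z2 * (z * z))))%C.
    - unfold eta4, L, Pa, Pb. field. nonzero_weights.
    - rewrite H4 by exact Hz. ring. }
  destruct (quartic_coefs_eq0 _ _ _ _ _ P4) as (_ & _ & Hx2 & Hv2 & Hz2).
  repeat split.
  - transitivity (L * Cconj alpha * Cconj beta
                  - (L * Cconj alpha * Cconj beta - z2))%C; [ring |].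
    rewrite Hz2. unfold eta4_z2, L. clear. to_coordinates. f_equal; field; nra.
  - transitivity ((L * (Cconj alpha * Pb + Cconj beta * Pa) + v2)
                  - L * (Cconj alpha * Pb + Cconj beta * Pa))%C; [ring |].
    rewrite Hv2. unfold eta4_v2, L, Pa, Pb. clear. to_coordinates. f_equal; field; nra.
  - set (c := (L * (- Cconj alpha * beta - alpha * Cconj beta + Pa * Pb))%C) in Hx2.
    assert (E : RtoC x2 = (c - (c - RtoC x2))%C) by ring.
    rewrite Hx2 in E. apply (f_equal fst) in E. change (fst (RtoC x2)) with x2 in E.
    rewrite E. unfold eta4_x2, c, L, Pa, Pb. clear.
    assert (0 <= Cmod alpha ^ 2) by apply pow2_ge_0.
    assert (0 <= Cmod beta ^ 2) by apply pow2_ge_0.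
    to_coordinates. field. nra.
Qed.

Lemma g_rhosigma2_root_form (sigma rho : R) (alpha beta gamma : C) :
  g_rhosigma2 (eta2_z1 sigma gamma) (eta2_x1 sigma gamma)
    (eta4_z2 rho alpha beta) (eta4_v2 rho alpha beta) (eta4_x2 rho alpha beta) =
  RtoC (rho * sigma ^ 2 * (cos (delta alpha gamma) * cos (delta beta gamma)
                           - / 3 * cos (delta alpha beta))).
Proof.
  unfold g_rhosigma2, eta2_z1, eta2_x1, eta4_z2, eta4_v2, eta4_x2.
  rewrite !cos_delta. to_coordinates.
  f_equal; field; repeat split; apply one_plus_sqr_sum_neq0.
Qed.

Lemma g_rho2sigma2_root_form (sigma rho : R) (alpha beta gamma : C) :
  g_rho2sigma2 (eta2_z1 sigma gamma) (eta2_x1 sigma gamma)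
    (eta4_z2 rho alpha beta) (eta4_v2 rho alpha beta) (eta4_x2 rho alpha beta) =
  RtoC (g_rho2 (eta4_z2 rho alpha beta) (eta4_v2 rho alpha beta) (eta4_x2 rho alpha beta)
        * g_sigma2 (eta2_z1 sigma gamma) (eta2_x1 sigma gamma)
        + / 4 * rho ^ 2 * sigma ^ 2
          * (Q02 alpha beta gamma - Qplus2 alpha beta gamma - Qminus2 alpha beta gamma)).
Proof.
  unfold g_rho2sigma2, g_rho2, g_sigma2, Q02, Qplus2, Qminus2, det3,
    eta2_z1, eta2_x1, eta4_z2, eta4_v2, eta4_x2.
  rewrite !cos_delta. to_coordinates.
  f_equal; field; repeat split; apply one_plus_sqr_sum_neq0.
Qed.

Theorem mainTheorem1 (sigma rho : R) (alpha beta gamma : C)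
  (x1 x2 : R) (z1 z2 v2 : C)
  (H2 : forall zeta : C, zeta <> 0%C ->
     eta2 sigma gamma zeta = (Cconj z1 / zeta + RtoC x1 - z1 * zeta)%C)
  (H4 : forall zeta : C, zeta <> 0%C ->
     eta4 rho alpha beta zeta =
       (Cconj z2 / (zeta * zeta) + Cconj v2 / zeta + RtoC x2
        - v2 * zeta + z2 * (zeta * zeta))%C) :
  g_rhosigma2 z1 x1 z2 v2 x2 =
    RtoC (rho * sigma ^ 2 * (cos (delta alpha gamma) * cos (delta beta gamma)
                             - / 3 * cos (delta alpha beta)))
  /\
  g_rho2sigma2 z1 x1 z2 v2 x2 =
    RtoC (g_rho2 z2 v2 x2 * g_sigma2 z1 x1
          + / 4 * rho ^ 2 * sigma ^ 2
            * (Q02 alpha beta gamma - Qplus2 alpha beta gamma - Qminus2 alpha beta gamma)).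
Proof.
  destruct (eta2_coefficients sigma gamma z1 x1 H2) as [-> ->].
  destruct (eta4_coefficients rho alpha beta z2 v2 x2 H4) as (-> & -> & ->).
  split; [apply g_rhosigma2_root_form | apply g_rho2sigma2_root_form].
Qed.
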